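(* In the model described in the context, if $\tau \leq 2f$, then it is impossible to implement an a-audit operation satisfying completeness.
   Context: Model. An asynchronous system has an arbitrary number of client processes (writers, readers, auditors) and $n$ storage objects $o_1,\dots,o_n$. Each $o_k$ is a linearisable loggable read/write register holding a block from a domain $\mathbb{B}$ and a log $L_k$ (initially empty). Its operations are: rw-write($b$), which stores $b$ and returns an ack; rw-read(), which returns the currently stored block (or $\perp\notin\mathbb{B}$ if none) and appends to $L_k$ the record $\langle p_r, \mathit{label}(b)\rangle$, where $p_r$ is the invoking reader and $\mathit{label}(b)$ identifies the value from which block $b$ was derived; and rw-getLog(), which returns $L_k$. On top of these objects, a multi-writer multi-reader register over a value domain $\mathbb{V}$ is emulated by information dispersal. An a-write($v$) encodes $v$ into $n$ blocks $b_{v_1},\dots,b_{v_n}$ and sends $b_{v_k}$ to $o_k$. A reader can recover $v$ from any $\tau$ distinct blocks of $v$, and cannot recover it from fewer; $\tau>f$. Reads (a-read) are fast, i.e. they complete in a single communication round-trip between the reader and the objects. Concurrency between operations is unlimited, and writes may remain incomplete. Faults. Writers and auditors are honest and can only crash. Faulty readers may crash or send read requests to only a subset of the objects. At most $f$ storage objects are faulty. A faulty object may crash, omit its block from readers, omit records from its log when queried by auditors, and report records of read operations that never occurred. Providing set: in a history $\sigma$, $P_{p_r,v}$ is the set of objects $o_k$ such that $\sigma$ contains both an event in which $o_k$ receives a write request to store $b_{v_k}$ and an event in which $o_k$ responds $b_{v_k}$ to a read request from $p_r$. A value $v$ is effectively read by $p_r$ in $\sigma$ iff $|P_{p_r,v}|\ge\tau$.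 Audit. An a-audit operation obtains logs via rw-getLog. To be available it relies only on an auditing quorum $A$ of $n-f$ objects. It returns a set $E_A$ of evidences. An evidence $\mathcal{E}_{p_r,v}$ (reporting that $p_r$ effectively read $v$) is created from at least $t\ge 1$ records $\langle p_r,\mathit{label}(v)\rangle$ coming from distinct objects; $t$ is a threshold parameter. Completeness: for every reader $p_r$ and every value $v$, if $v$ was effectively read by $p_r$ ($|P_{p_r,v}|\ge\tau$) before the a-audit is invoked, then $\mathcal{E}_{p_r,v}\in E_A$. *)

(* Abstract model of the state of the emulation at the
   moment an a-audit is invoked, and of what the audit can observe. *)
From mathcomp Require Import all_boot.
Set Implicit Arguments. Unset Strict Implicit. Unset Printing Implicit Defensive.

(* Objects are o_0 .. o_{n-1} : 'I_n.  Readers range over an eqType R,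
   values over an eqType V; label(b_{v_k}) is identified with v itself.
   A log record <p_r, label(v)> is the pair (p_r, v). *)

Record history (n : nat) (R V : eqType) := History {
  faulty  : {set 'I_n};
  (* served k p v : o_k received a write request to store b_{v_k} and
     responded b_{v_k} to a read request of p *)
  served  : 'I_n -> R -> V -> bool;
  trueLog : 'I_n -> seq (R * V)
}.

Definition admissible_history (n f : nat) (R V : eqType) (h : history n R V) :=
  #|faulty h| <= f /\
  forall k, k \notin faulty h -> forall p v,
    served h k p v = ((p, v) \in trueLog h k).

Definition providing_set (n : nat) (R V : eqType) (h : history n R V) p v :=
  [set k | served h k p v].

Definition effectively_read (n tau : nat) (R V : eqType) (h : history n R V) p v :=
  tau <= #|providing_set h p v|.

(* An a-audit: from the auditing quorum A that answered rw-getLog and the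
   logs L k reported by the objects, it returns the set E_A of evidences,
   given as a boolean predicate: audit A L p v  <->  E_{p,v} \in E_A. *)
Definition audit_fun (n : nat) (R V : eqType) :=
  {set 'I_n} -> ('I_n -> seq (R * V)) -> R -> V -> bool.

(* Admissible responses to the audit in history h: an auditing quorum of
   n - f objects answers; correct objects report their true log, faulty
   ones may report anything (omitted or fabricated records). *)
Definition admissible_response (n f : nat) (R V : eqType) (h : history n R V)
    (A : {set 'I_n}) (L : 'I_n -> seq (R * V)) :=
  #|A| = n - f /\ forall k, k \in A -> k \notin faulty h -> L k = trueLog h k.

Definition evidence_sound (n t : nat) (R V : eqType) (audit : audit_fun n R V) :=
  forall A L p v, audit A L p v -> t <= #|[set k in A | (p, v) \in L k]|.

Definition audit_complete (n f tau : nat) (R V : eqType) (audit : audit_fun n R V) :=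
  forall h : history n R V, admissible_history f h ->
  forall A L, admissible_response f h A L ->
  forall p v, effectively_read tau h p v -> audit A L p v.

From mathcomp Require Import all_boot zify.

(* Let a value be read from exactly [tau] objects (the last ones), the first
   [f] of which are faulty and erase the read from their logs.  The remaining
   [tau - f <= f] correct providers can all lie among the [f] objects missing
   from the auditing quorum (the first [n - f] objects), so the quorum reports
   no record of the read, while completeness demands an evidence, which needs
   at least [t >= 1] such records. *)

Set Implicit Arguments.
Unset Strict Implicit.
Unset Printing Implicit Defensive.

Lemma card_ord_ltn n b : #|[set k : 'I_n | k < b]| = minn n b.
Proof.
case: (leqP n b) => [le_nb | lt_bn].
  rewrite -[RHS]card_ord; apply: eq_card => k.
  by rewrite !inE (leq_trans (ltn_ord k) le_nb).
have le_bn := ltnW lt_bn.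
have widen_ord_inj : injective (widen_ord le_bn) by move=> i j [] /val_inj.
rewrite -[RHS]card_ord -cardsT -(card_imset _ widen_ord_inj).
apply: eq_card => k; rewrite inE.
apply/idP/imsetP => [lt_kb | [j _ ->]]; last exact: (ltn_ord j).
by exists (Ordinal lt_kb) => //; apply: val_inj.
Qed.

Lemma no_sound_complete_audit_of_hidden_read n f tau t (R V : eqType)
    (h : history n R V) A L p v :
  0 < t -> admissible_history f h -> admissible_response f h A L ->
  effectively_read tau h p v -> [set k in A | (p, v) \in L k] = set0 ->
  ~ exists audit : audit_fun n R V,
      evidence_sound t audit /\ audit_complete f tau audit.
Proof.
move=> t_gt0 adm_h adm_AL read_pv no_record [audit [sound complete]].
have := sound A L p v (complete h adm_h A L adm_AL p v read_pv).
by rewrite no_record cards0 leqNgt t_gt0.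
Qed.

Section HiddenRead.

Variables (n f tau : nat) (R V : eqType) (p0 : R) (v0 : V).

Definition providers : {set 'I_n} := ~: [set k : 'I_n | k < n - tau].

Definition hiders : {set 'I_n} :=
  [set k : 'I_n | k < n - tau + f] :\: [set k : 'I_n | k < n - tau].

Definition quorum : {set 'I_n} := [set k : 'I_n | k < n - f].

Definition provider_log (k : 'I_n) : seq (R * V) :=
  if k \in providers then [:: (p0, v0)] else [::].

Definition hidden_read_history : history n R V :=
  History hiders (fun k p v => (p, v) \in provider_log k) provider_log.

Definition reported_log (k : 'I_n) : seq (R * V) :=
  if k \in hiders then [::] else provider_log k.

Lemma card_hiders : #|hiders| <= f.
Proof.
have sub_prefix :
    [set k : 'I_n | k < n - tau] \subset [set k : 'I_n | k < n - tau + f].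
  by apply/subsetP => k; rewrite !inE => /leq_trans; apply; apply: leq_addr.
by rewrite cardsD (setIidPr sub_prefix) !card_ord_ltn; lia.
Qed.

Lemma hidden_read_history_admissible : admissible_history f hidden_read_history.
Proof. by split=> //; apply: card_hiders. Qed.

Lemma quorum_response_admissible :
  admissible_response f hidden_read_history quorum reported_log.
Proof.
split; first by rewrite card_ord_ltn; lia.
by move=> k _ /= /negbTE k_honest; rewrite /reported_log k_honest.
Qed.

Lemma hidden_read_effective :
  tau <= n -> effectively_read tau hidden_read_history p0 v0.
Proof.
move=> le_tau_n; rewrite /effectively_read /providing_set /=.
have -> : [set k | (p0, v0) \in provider_log k] = providers.
  apply/setP => k; rewrite inE /provider_log.
  by case: (k \in providers); rewrite ?mem_seq1 ?eqxx.
by rewrite cardsCs setCK card_ord card_ord_ltn; lia.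
Qed.

Lemma quorum_reports_no_record :
  tau <= n -> tau <= 2 * f ->
  [set k in quorum | (p0, v0) \in reported_log k] = set0.
Proof.
move=> le_tau_n le_tau_2f; apply/setP => k; rewrite !inE /reported_log.
rewrite /hiders /provider_log /providers !inE -leqNgt.
case: ifP => [_ | not_hidden]; first by rewrite andbF.
case: ifP => [le_k | _]; last by rewrite andbF.
move: not_hidden; rewrite le_k mem_seq1 eqxx andbT => /negbT.
by rewrite -!leqNgt; lia.
Qed.

End HiddenRead.

Theorem lemma2 (n f tau t : nat) (R V : eqType) (p0 : R) (v0 : V) :
  1 <= t -> f < tau -> tau <= n -> tau <= 2 * f ->
  ~ exists audit : audit_fun n R V,
      evidence_sound t audit /\ audit_complete f tau audit.
Proof.
move=> t_gt0 _ le_tau_n le_tau_2f.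
apply: (no_sound_complete_audit_of_hidden_read (p := p0) (v := v0) t_gt0
  (hidden_read_history_admissible n f tau p0 v0)
  (quorum_response_admissible n f tau p0 v0)
  (hidden_read_effective f p0 v0 le_tau_n)).
exact: quorum_reports_no_record.
Qed.
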